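(* Let $\varphi$ be an IPDL-formula all of whose propositional variables are among $p_1,\ldots,p_n$ and all of whose atomic program terms are among $a_1,\ldots,a_l$ ($l\ge 1$). Let $\gamma = a_1\cup\cdots\cup a_l$, let $\cdot'$ be the translation defined in the context (which uses the fresh variable $p_{n+1}$), let $$\Theta = p_{n+1}\wedge [\gamma^*](\langle\gamma\rangle p_{n+1}\rightarrow p_{n+1}),$$ and let $\widehat{\varphi} = \Theta\wedge\varphi'$. Then $\varphi$ is satisfiable if, and only if, $\widehat{\varphi}$ is satisfiable.
   Context: Fix a countable set $\mathit{Var}=\{p_1,p_2,\ldots\}$ of propositional variables and a countable set $AP=\{a_1,a_2,\ldots\}$ of atomic program terms. IPDL formulas $\varphi$ and program terms $\alpha$ are defined simultaneously by $\varphi ::= p \mid \bot \mid (\varphi\rightarrow\varphi)\mid [\alpha]\varphi$ and $\alpha ::= a \mid \varphi? \mid (\alpha;\alpha)\mid(\alpha\cup\alpha)\mid(\alpha\cap\alpha)\mid \alpha^*$, where $p\in\mathit{Var}$, $a\in AP$. The connectives $\neg,\wedge,\vee,\leftrightarrow,\top$ are defined as usual and $\langle\alpha\rangle\psi=\neg[\alpha]\neg\psi$. A Kripke model is $\mathfrak{M}=(S,\{R_a\}_{a\in AP},V)$ with $S$ a nonempty set, each $R_a\subseteq S\times S$, and $V:\mathit{Var}\to 2^S$. Relations for compound programs and the satisfaction relation are defined simultaneously: $(s,t)\in R_{\psi?}$ iff $s=t$ and $\mathfrak{M},s\models\psi$; $R_{\alpha;\beta}$ is the relational composition of $R_\alpha$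 and $R_\beta$; $R_{\alpha\cup\beta}=R_\alpha\cup R_\beta$; $R_{\alpha\cap\beta}=R_\alpha\cap R_\beta$; $R_{\alpha^*}$ is the reflexive transitive closure of $R_\alpha$; $\mathfrak{M},s\models p$ iff $s\in V(p)$; $\mathfrak{M},s\not\models\bot$; $\mathfrak{M},s\models\psi\rightarrow\chi$ iff $\mathfrak{M},s\models\psi$ implies $\mathfrak{M},s\models\chi$; $\mathfrak{M},s\models[\alpha]\psi$ iff $\mathfrak{M},t\models\psi$ for all $t$ with $(s,t)\in R_\alpha$. A formula is satisfiable if it is true at some state of some model. The translation $\cdot'$ (for $\varphi$ as in the claim) is defined recursively: $a_j'=a_j$; $(\alpha;\beta)'=\alpha';\beta'$; $(\alpha\cup\beta)'=\alpha'\cup\beta'$; $(\alpha\cap\beta)'=\alpha'\cap\beta'$; $(\alpha^* )'=(\alpha')^*$; $(\psi?)'=(\psi')?$; $p_i'=p_i$ for $i\le n$; $\bot'=\bot$; $(\psi\rightarrow\chi)'=\psi'\rightarrow\chi'$; $([\alpha]\psi)'=[\alpha'](p_{n+1}\rightarrow\psi')$. *)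

From Stdlib Require Import Arith Relations.

(* Propositional variable p_{i+1} is represented by [Var i] (i : nat),
   atomic program a_{j+1} by [Atom j] (j : nat). *)
Inductive formula : Type :=
| Var : nat -> formula
| Bot : formula
| Imp : formula -> formula -> formula
| Box : program -> formula -> formula
with program : Type :=
| Atom : nat -> program
| Test : formula -> program
| Seq : program -> program -> program
| Union : program -> program -> program
| Inter : program -> program -> program
| Star : program -> program.

Definition Neg (f : formula) : formula := Imp f Bot.
Definition And (f g : formula) : formula := Neg (Imp f (Neg g)).
Definition Dia (a : program) (f : formula) : formula := Neg (Box a (Neg f)).

Record model : Type := Model {
  state : Type;
  inhabited_state : inhabited state;
  rel : nat -> state -> state -> Prop;
  val : nat -> state -> Prop
}.

Fixpoint sat (M : model) (s : state M) (f : formula) {struct f} : Prop :=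
  match f with
  | Var i => val M i s
  | Bot => False
  | Imp f1 f2 => sat M s f1 -> sat M s f2
  | Box a g => forall t, prel M a s t -> sat M t g
  end
with prel (M : model) (a : program) {struct a} : state M -> state M -> Prop :=
  match a with
  | Atom j => rel M j
  | Test g => fun s t => s = t /\ sat M s g
  | Seq a1 a2 => fun s t => exists u, prel M a1 s u /\ prel M a2 u t
  | Union a1 a2 => fun s t => prel M a1 s t \/ prel M a2 s t
  | Inter a1 a2 => fun s t => prel M a1 s t /\ prel M a2 s t
  | Star a1 => clos_refl_trans (state M) (prel M a1)
  end.

Definition satisfiable (f : formula) : Prop :=
  exists (M : model) (s : state M), sat M s f.

Fixpoint vars_below (n : nat) (f : formula) : Prop :=
  match f with
  | Var i => i < n
  | Bot => True
  | Imp f1 f2 => vars_below n f1 /\ vars_below n f2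
  | Box a g => pvars_below n a /\ vars_below n g
  end
with pvars_below (n : nat) (a : program) : Prop :=
  match a with
  | Atom _ => True
  | Test g => vars_below n g
  | Seq a1 a2 | Union a1 a2 | Inter a1 a2 => pvars_below n a1 /\ pvars_below n a2
  | Star a1 => pvars_below n a1
  end.

Fixpoint atoms_below (l : nat) (f : formula) : Prop :=
  match f with
  | Var _ => True
  | Bot => True
  | Imp f1 f2 => atoms_below l f1 /\ atoms_below l f2
  | Box a g => patoms_below l a /\ atoms_below l g
  end
with patoms_below (l : nat) (a : program) : Prop :=
  match a with
  | Atom j => j < l
  | Test g => atoms_below l g
  | Seq a1 a2 | Union a1 a2 | Inter a1 a2 => patoms_below l a1 /\ patoms_below l a2
  | Star a1 => patoms_below l a1
  end.

(* gamma l = a_1 U ... U a_l (left-associated), meaningful for l >= 1. *)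
Fixpoint gamma (l : nat) : program :=
  match l with
  | 0 => Atom 0
  | S k => match k with
           | 0 => Atom 0
           | S _ => Union (gamma k) (Atom k)
           end
  end.

(* The translation ' ; the fresh variable p_{n+1} is [Var n]. *)
Fixpoint tr (n : nat) (f : formula) : formula :=
  match f with
  | Var i => Var i
  | Bot => Bot
  | Imp f1 f2 => Imp (tr n f1) (tr n f2)
  | Box a g => Box (ptr n a) (Imp (Var n) (tr n g))
  end
with ptr (n : nat) (a : program) : program :=
  match a with
  | Atom j => Atom j
  | Test g => Test (tr n g)
  | Seq a1 a2 => Seq (ptr n a1) (ptr n a2)
  | Union a1 a2 => Union (ptr n a1) (ptr n a2)
  | Inter a1 a2 => Inter (ptr n a1) (ptr n a2)
  | Star a1 => Star (ptr n a1)
  end.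

Definition Theta (n l : nat) : formula :=
  And (Var n) (Box (Star (gamma l)) (Imp (Dia (gamma l) (Var n)) (Var n))).

Definition hat (n l : nat) (f : formula) : formula := And (Theta n l) (tr n f).

(* If phi holds at s, making p_{n+1} true everywhere satisfies Theta and turns
   every [a]psi into the equivalent [a](p_{n+1} -> psi).  Conversely, suppose
   Theta /\ phi' holds at s.  Theta says that, among the gamma*-successors of s,
   p_{n+1} is closed under gamma-predecessors; since every atom of phi occurs
   in gamma, p_{n+1} is then closed under predecessors along every translated
   program.  Hence restricting all accessibility relations to p_{n+1}-states
   loses no path between p_{n+1}-states, and on that restriction phi'
   collapses to phi. *)
From Stdlib Require Import Arith Relations Lia Classical.

Scheme formula_mut_ind := Induction for formula Sort Prop
with program_mut_ind := Induction for program Sort Prop.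
Combined Scheme formula_program_ind from formula_mut_ind, program_mut_ind.

Lemma clos_refl_trans_mono (T : Type) (R S : relation T) :
  inclusion T R S -> inclusion T (clos_refl_trans T R) (clos_refl_trans T S).
Proof.
  intros RS x y Rxy; induction Rxy as [x y Rxy | x | x y z _ IHxy _ IHyz].
  - apply rt_step, RS, Rxy.
  - apply rt_refl.
  - apply rt_trans with y; assumption.
Qed.

Lemma sat_And (M : model) (s : state M) (f g : formula) :
  sat M s (And f g) <-> sat M s f /\ sat M s g.
Proof.
  simpl; destruct (classic (sat M s f)), (classic (sat M s g)); tauto.
Qed.

Lemma sat_Dia (M : model) (s : state M) (a : program) (f : formula) :
  sat M s (Dia a f) <-> exists t, prel M a s t /\ sat M t f.
Proof.
  simpl; split.
  - intros Hnot; apply NNPP; intros Hnone.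
    apply Hnot; intros t Hst Ht; apply Hnone; exists t; auto.
  - intros [t [Hst Ht]] Hbox; exact (Hbox t Hst Ht).
Qed.

Lemma sat_Theta (M : model) (s : state M) (n l : nat) :
  sat M s (Theta n l) <->
  val M n s /\
  forall t u, clos_refl_trans _ (prel M (gamma l)) s t ->
    prel M (gamma l) t u -> val M n u -> val M n t.
Proof.
  unfold Theta; rewrite sat_And; simpl.
  split; intros [Hs Hclosed]; split; auto.
  - intros t u Hst Htu Hu; apply (Hclosed t Hst).
    apply (sat_Dia M t (gamma l) (Var n)); exists u; auto.
  - intros t Hst Hdia.
    destruct (proj1 (sat_Dia M t (gamma l) (Var n)) Hdia) as [u [Htu Hu]].
    exact (Hclosed t u Hst Htu Hu).
Qed.

Lemma prel_gamma_Atom (M : model) (l j : nat) (t u : state M) :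
  j < l -> rel M j t u -> prel M (gamma l) t u.
Proof.
  induction l as [|[|k] IH]; intros Hj Htu; [lia | |].
  - assert (j = 0) as -> by lia; exact Htu.
  - change (prel M (gamma (S k)) t u \/ rel M (S k) t u).
    destruct (Nat.eq_dec j (S k)) as [-> | Hne]; [right | left]; auto.
    apply IH; [lia | exact Htu].
Qed.

Definition with_true_var (M : model) (n : nat) : model :=
  Model (state M) (inhabited_state M) (rel M) (fun i t => i = n \/ val M i t).

Lemma with_true_var_tr (M : model) (n : nat) :
  (forall f, vars_below n f -> forall t,
      sat (with_true_var M n) t (tr n f) <-> sat M t f) /\
  (forall a, pvars_below n a -> forall t u,
      prel (with_true_var M n) (ptr n a) t u <-> prel M a t u).
Proof.
  apply formula_program_ind; simpl.
  - intros i Hi t; split; [intros [-> | H]; [lia | exact H] | auto].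
  - tauto.
  - intros f IHf g IHg [Hf Hg] t; rewrite (IHf Hf t), (IHg Hg t); tauto.
  - intros a IHa g IHg [Ha Hg] t; split.
    + intros H u Htu; apply (IHg Hg), H; [apply (IHa Ha), Htu | left; reflexivity].
    + intros H u Htu _; apply (IHg Hg), H, (IHa Ha), Htu.
  - tauto.
  - intros g IHg Hg t u; rewrite (IHg Hg t); tauto.
  - intros a1 IH1 a2 IH2 [H1 H2] t u; split; intros [w [Htw Hwu]]; exists w;
      split; [apply (IH1 H1) | apply (IH2 H2) | apply (IH1 H1) | apply (IH2 H2)]; auto.
  - intros a1 IH1 a2 IH2 [H1 H2] t u; rewrite (IH1 H1), (IH2 H2); tauto.
  - intros a1 IH1 a2 IH2 [H1 H2] t u; rewrite (IH1 H1), (IH2 H2); tauto.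
  - intros a IHa Ha t u; split; apply clos_refl_trans_mono;
      intros x y; apply (IHa Ha).
Qed.

(* The states are kept and only the transitions are cut down, which avoids
   forming a subtype of states and needing proof irrelevance. *)
Definition restrict_to_var (M : model) (n : nat) : model :=
  Model (state M) (inhabited_state M)
    (fun j x y => rel M j x y /\ val M n x /\ val M n y) (val M).

Section Restriction.

Variables (M : model) (n l : nat) (s : state M).

Definition reachable (t : state M) : Prop :=
  clos_refl_trans _ (prel M (gamma l)) s t.

Hypothesis var_pred_closed : forall t u,
  reachable t -> prel M (gamma l) t u -> val M n u -> val M n t.

Lemma reachable_ptr (a : program) : patoms_below l a -> forall t u,
  reachable t -> prel M (ptr n a) t u -> reachable u /\ (val M n u -> val M n t).
Proof.
  induction a as [j | g | a1 IH1 a2 IH2 | a1 IH1 a2 IH2 | a1 IH1 a2 IH2 | a IH];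
    simpl; intros Ha t u Ht Htu.
  - assert (Hstep : prel M (gamma l) t u) by exact (prel_gamma_Atom M l j t u Ha Htu).
    split; [apply rt_trans with t; [exact Ht | apply rt_step, Hstep] |].
    exact (var_pred_closed t u Ht Hstep).
  - destruct Htu as [<- _]; auto.
  - destruct Ha as [H1 H2], Htu as [w [Htw Hwu]].
    destruct (IH1 H1 t w Ht Htw) as [Hw Hwt], (IH2 H2 w u Hw Hwu) as [Hu Huw]; auto.
  - destruct Ha as [H1 H2], Htu as [Htu | Htu]; [apply IH1 | apply IH2]; auto.
  - destruct Ha as [H1 _], Htu as [Htu _]; apply IH1; auto.
  - induction Htu as [x y Hxy | x | x y z _ IHxy _ IHyz]; auto.
    destruct (IHxy Ht) as [Hy Hyx], (IHyz Hy) as [Hz Hzy]; auto.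
Qed.

Definition reachable_var (t : state M) : Prop := reachable t /\ val M n t.

Lemma reachable_var_ptr (a : program) (x y : state M) : patoms_below l a ->
  reachable_var x -> prel M (ptr n a) x y -> val M n y -> reachable_var y.
Proof.
  intros Ha [Hx _] Hxy Hy; split; [apply (reachable_ptr a Ha x y Hx Hxy) | exact Hy].
Qed.

Lemma restrict_to_var_Star (a : program) : patoms_below l a ->
  (forall x y, reachable_var x ->
     prel (restrict_to_var M n) a x y <-> prel M (ptr n a) x y /\ val M n y) ->
  forall x y, reachable_var x ->
    clos_refl_trans _ (prel (restrict_to_var M n) a) x y <->
    clos_refl_trans _ (prel M (ptr n a)) x y /\ val M n y.
Proof.
  intros Ha IH x y Hx; split.
  - intros Hxy; induction Hxy as [x y Hxy | x | x y z _ IHxy _ IHyz].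
    + apply (IH x y Hx) in Hxy as [Hxy Hy]; split; [apply rt_step |]; auto.
    + split; [apply rt_refl | apply Hx].
    + destruct (IHxy Hx) as [Hxy Hy].
      destruct (IHyz (reachable_var_ptr (Star a) x y Ha Hx Hxy Hy)) as [Hyz Hz].
      split; [apply rt_trans with y |]; auto.
  - intros [Hxy Hy]; apply clos_rt_rt1n in Hxy.
    induction Hxy as [x | x u y Hxu Huy IHuy]; [apply rt_refl |].
    assert (Hu : reachable u) by exact (proj1 (reachable_ptr a Ha x u (proj1 Hx) Hxu)).
    assert (Hvu : val M n u)
      by exact (proj2 (reachable_ptr (Star a) Ha u y Hu (clos_rt1n_rt _ _ _ _ Huy)) Hy).
    apply rt_trans with u; [apply rt_step, (IH x u Hx); split; auto |].
    apply IHuy; [split |]; auto.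
Qed.

Lemma restrict_to_var_tr :
  (forall f, atoms_below l f -> forall x, reachable_var x ->
      sat (restrict_to_var M n) x f <-> sat M x (tr n f)) /\
  (forall a, patoms_below l a -> forall x y, reachable_var x ->
      prel (restrict_to_var M n) a x y <-> prel M (ptr n a) x y /\ val M n y).
Proof.
  apply formula_program_ind; simpl.
  - tauto.
  - tauto.
  - intros f IHf g IHg [Hf Hg] x Hx; rewrite (IHf Hf x Hx), (IHg Hg x Hx); tauto.
  - intros a IHa g IHg [Ha Hg] x Hx; split.
    + intros H y Hxy Hy.
      apply (IHg Hg y (reachable_var_ptr a x y Ha Hx Hxy Hy)), H, (IHa Ha x y Hx); auto.
    + intros H y Hxy; apply (IHa Ha x y Hx) in Hxy as [Hxy Hy].
      apply (IHg Hg y (reachable_var_ptr a x y Ha Hx Hxy Hy)), H; auto.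
  - intros j _ x y [_ Hx]; tauto.
  - intros g IHg Hg x y Hx; rewrite (IHg Hg x Hx); split.
    + intros [<- H]; split; [| apply Hx]; auto.
    + intros [H _]; exact H.
  - intros a1 IH1 a2 IH2 [H1 H2] x y Hx; split.
    + intros [u [Hxu Huy]]; apply (IH1 H1 x u Hx) in Hxu as [Hxu Hu].
      apply (IH2 H2 u y (reachable_var_ptr a1 x u H1 Hx Hxu Hu)) in Huy as [Huy Hy].
      split; [exists u |]; auto.
    + intros [[u [Hxu Huy]] Hy].
      assert (Hru : reachable u) by exact (proj1 (reachable_ptr a1 H1 x u (proj1 Hx) Hxu)).
      assert (Hu : val M n u) by exact (proj2 (reachable_ptr a2 H2 u y Hru Huy) Hy).
      exists u; split; [apply (IH1 H1 x u Hx) | apply (IH2 H2 u y (conj Hru Hu))]; auto.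
  - intros a1 IH1 a2 IH2 [H1 H2] x y Hx; rewrite (IH1 H1 x y Hx), (IH2 H2 x y Hx); tauto.
  - intros a1 IH1 a2 IH2 [H1 H2] x y Hx; rewrite (IH1 H1 x y Hx), (IH2 H2 x y Hx); tauto.
  - intros a IHa Ha; exact (restrict_to_var_Star a Ha (IHa Ha)).
Qed.

End Restriction.

Theorem lemma1 (n l : nat) (phi : formula) :
  1 <= l -> vars_below n phi -> atoms_below l phi ->
  (satisfiable phi <-> satisfiable (hat n l phi)).
Proof.
  intros _ Hvars Hatoms; unfold hat; split.
  - intros [M [s Hs]]; exists (with_true_var M n), s.
    rewrite sat_And, sat_Theta; split; [split; [left | intros; left]; reflexivity |].
    apply (proj1 (with_true_var_tr M n) phi Hvars s), Hs.
  - intros [M [s Hs]]; rewrite sat_And, sat_Theta in Hs.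
    destruct Hs as [[Hn Hclosed] Hphi].
    exists (restrict_to_var M n), s.
    apply (proj1 (restrict_to_var_tr M n l s Hclosed) phi Hatoms s (conj (rt_refl _ _ s) Hn)).
    exact Hphi.
Qed.
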